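(* Let $u,w$ be words over $\{L,R\}$. If $w$ starts with $L$ and $u$ is a tail of $w$, then $Lu$ is reduced from $Lw$. Dually, if $w$ starts with $R$ and $u$ is a tail of $w$, then $Ru$ is reduced from $Rw$.
   Context: Words are finite strings (including the empty word) over $\{L,R\}$. A tail of $w$ is any word $v'$ with $w=vv'$ for some word $v$. A word $u$ is reduced from $w$ if it is obtained from $w$ by finitely many (possibly zero) successive applications of the reduction rules, where $v,v'$ are arbitrary words: (1) $vRRv'\Rightarrow vRv'$; (1') $vLLv'\Rightarrow vLv'$; (2) $vLRv'\Rightarrow vv'$; (2') $vRLv'\Rightarrow vv'$. *)

From Stdlib Require Import List Relations.
Import ListNotations.

Inductive letter : Type := L | R.

Definition word := list letter.

Inductive step : word -> word -> Prop :=
| step_RR : forall v v' : word, step (v ++ [R; R] ++ v') (v ++ [R] ++ v')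
| step_LL : forall v v' : word, step (v ++ [L; L] ++ v') (v ++ [L] ++ v')
| step_LR : forall v v' : word, step (v ++ [L; R] ++ v') (v ++ v')
| step_RL : forall v v' : word, step (v ++ [R; L] ++ v') (v ++ v').

Definition reduced_from (u w : word) : Prop := clos_refl_trans word step w u.

Definition is_tail (u w : word) : Prop := exists v : word, w = v ++ u.

(* Every word reduces to a word with at most one letter, so [a a v] reduces to
   [a a], [a a a] or [a a b] with [b] the other letter, each of which reduces
   to [a].  Hence if [w = a p u] then [a w = a a p u] reduces to [a u]. *)

From Stdlib Require Import List Relations Lia.
Import ListNotations.

Definition opp (a : letter) : letter := match a with L => R | R => L end.

Lemma step_idem a v v' : step (v ++ [a; a] ++ v') (v ++ [a] ++ v').
Proof. destruct a; constructor. Qed.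

Lemma step_cancel a v v' : step (v ++ [a; opp a] ++ v') (v ++ v').
Proof. destruct a; constructor. Qed.

Lemma step_context p s x y : step x y -> step (p ++ x ++ s) (p ++ y ++ s).
Proof.
  intros H; destruct H; rewrite !app_assoc, <- !(app_assoc (p ++ v));
    constructor.
Qed.

Lemma reduced_from_step x y : step x y -> reduced_from y x.
Proof. apply rt_step. Qed.

Lemma reduced_from_trans x y z :
  reduced_from y x -> reduced_from z y -> reduced_from z x.
Proof. intros; eapply rt_trans; eassumption. Qed.

Lemma reduced_from_context p s x y :
  reduced_from y x -> reduced_from (p ++ y ++ s) (p ++ x ++ s).
Proof.
  unfold reduced_from; intros H; induction H.
  - apply rt_step, step_context; assumption.
  - apply rt_refl.
  - eapply rt_trans; eassumption.
Qed.

Lemma reduced_from_length_le1 v : exists y, length y <= 1 /\ reduced_from y v.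
Proof.
  induction v as [|a v IH] using rev_ind.
  - exists []; split; [simpl; lia | apply rt_refl].
  - destruct IH as [y [Hlen Hred]].
    assert (Hya : reduced_from (y ++ [a]) (v ++ [a]))
      by exact (reduced_from_context [] [a] _ _ Hred).
    destruct y as [|b [|c y]]; simpl in Hlen; try lia.
    + exists [a]; split; [simpl; lia | exact Hya].
    + assert (Hb : b = a \/ a = opp b) by (destruct a, b; auto).
      destruct Hb as [-> | ->].
      * exists [a]; split; [simpl; lia|].
        apply (reduced_from_trans _ _ _ Hya), reduced_from_step.
        exact (step_idem a [] []).
      * exists []; split; [simpl; lia|].
        apply (reduced_from_trans _ _ _ Hya), reduced_from_step.
        exact (step_cancel b [] []).
Qed.

Lemma reduced_from_cons_cons a v : reduced_from [a] (a :: a :: v).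
Proof.
  destruct (reduced_from_length_le1 v) as [y [Hlen Hred]].
  apply (reduced_from_context [a; a] []) in Hred; rewrite !app_nil_r in Hred.
  apply (reduced_from_trans _ _ _ Hred).
  destruct y as [|b [|c y]]; simpl in Hlen; try lia.
  - apply reduced_from_step; exact (step_idem a [] []).
  - assert (Hb : b = a \/ b = opp a) by (destruct a, b; auto).
    destruct Hb as [-> | ->].
    + apply (reduced_from_trans _ [a; a]); apply reduced_from_step;
        [exact (step_idem a [] [a]) | exact (step_idem a [] [])].
    + apply reduced_from_step; exact (step_cancel a [a] []).
Qed.

Lemma reduced_from_cons_tail a u w :
  (exists w0, w = a :: w0) -> is_tail u w -> reduced_from (a :: u) (a :: w).
Proof.
  intros [w0 ->] [[|b p] Hp]; simpl in Hp.
  - subst u; apply rt_refl.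
  - injection Hp as <- ->.
    exact (reduced_from_context [] u _ _ (reduced_from_cons_cons a p)).
Qed.

Theorem mainTheorem6 :
  (forall u w : word,
      (exists w0, w = L :: w0) -> is_tail u w ->
      reduced_from (L :: u) (L :: w)) /\
  (forall u w : word,
      (exists w0, w = R :: w0) -> is_tail u w ->
      reduced_from (R :: u) (R :: w)).
Proof. split; apply reduced_from_cons_tail. Qed.
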